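(* For $r\ge1$ let $\mathring Y^{(n)}_r$ be the number of vertices $v\in V_n$ whose activity is at least $r$. Then for every $0<\varepsilon<1$, $$\sup_{n\ge1}\mathbf P\big(n^{-1}\mathring Y^{(n)}_r>\varepsilon\big)\to0\qquad\text{as } r\to\infty.$$
   Context: Preferred attachment affiliation model. Fix a real $\lambda>0$, an integer $k\ge 1$ and an integer $l\ge 0$ with $\lambda\le k+l$. At time $0$ a library contains books $w_1,\dots,w_l$, each with score $1$. For $n=0,1,2,\dots$, step $n+1$ proceeds as follows: $k$ new books $w_{l+nk+1},\dots,w_{l+(n+1)k}$ arrive, each with score $1$; then a customer $v_{n+1}$ arrives and, conditionally on the past and independently over books, downloads each book $w\in W_{n+1}=\{w_1,\dots,w_{l+(n+1)k}\}$ with probability $p_{n+1,s(w)}=\lambda s(w)/(l+(n+1)k+n\lambda)$, where $s(w)$ is the current score of $w$. Every book downloaded by $v_{n+1}$ then has its score increased by $1$. Let $V_n=\{v_1,\dots,v_n\}$. The activity of a customer $v$ is the number of books it downloaded. *)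

From Stdlib Require Import Reals List Arith.
Import ListNotations.
Open Scope R_scope.

(* A history is the list [D_1; ...; D_m] of download sets; D_i is a boolean
   list of length l + i*k, entry w (0-based) telling whether customer v_i
   downloaded book w_{w+1}. *)
Definition history := list (list bool).

Fixpoint bool_lists (m : nat) : list (list bool) :=
  match m with
  | O => [[]]
  | S m' => map (cons true) (bool_lists m') ++ map (cons false) (bool_lists m')
  end.

Definition score (h : history) (w : nat) : nat :=
  S (length (filter (fun D => nth w D false) h)).

(* probability that customer v_{n+1} (n = length h) downloads exactly the
   books in D, given the history h *)
Definition step_weight (lam : R) (k l : nat) (h : history) (D : list bool) : R :=
  let n := length h in
  let denom := INR (l + (n + 1) * k) + INR n * lam in
  fold_right Rmult 1
    (map (fun w => let p := lam * INR (score h w) / denom in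
                   if nth w D false then p else 1 - p)
         (seq 0 (l + (n + 1) * k))).

Fixpoint expect (lam : R) (k l : nat) (m : nat) (h : history)
  (f : history -> R) : R :=
  match m with
  | O => f h
  | S m' =>
      fold_right Rplus 0
        (map (fun D => step_weight lam k l h D * expect lam k l m' (h ++ [D]) f)
             (bool_lists (l + (length h + 1) * k)))
  end.

Definition activity (D : list bool) : nat := length (filter (fun b => b) D).

Definition Y_ring (r : nat) (h : history) : nat :=
  length (filter (fun D => Nat.leb r (activity D)) h).

Definition prob_Y_large (lam : R) (k l n r : nat) (eps : R) : R :=
  expect lam k l n []
    (fun h => if Rlt_dec eps (INR (Y_ring r h) / INR n) then 1 else 0).

From Stdlib Require Import Reals List Arith Lia Lra.
Import ListNotations.
Open Scope R_scope.

(* Let T(h) be the total activity of the customers of history h.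
   When customer v_{n+1} arrives, the expected number of books it downloads is
   lam * (sum of current scores) / (l + (n+1)k + n lam), and the sum of the
   scores of the l + (n+1)k books is at most l + (n+1)k + T(h).  This gives
   E[T_{n+1} | h] <= (1 + lam/den) T(h) + lam L / den, and by induction
   E[T_n] <= n lam.  Since every customer counted by Y_r has activity >= r,
   r Y_r <= T, and Markov's inequality yields
   P(Y_r / n > eps) <= E[T_n] / (r n eps) <= lam / (r eps), uniformly in n. *)

Notation sumR := (fold_right Rplus 0).

Lemma sum_app (l1 l2 : list R) : sumR (l1 ++ l2) = sumR l1 + sumR l2.
Proof. induction l1; simpl; [lra | rewrite IHl1; lra]. Qed.

Lemma sum_scale {A} (f : A -> R) c (l : list A) :
  sumR (map (fun x => c * f x) l) = c * sumR (map f l).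
Proof. induction l; simpl; [ring | rewrite IHl; ring]. Qed.

Lemma sum_plus {A} (f g : A -> R) (l : list A) :
  sumR (map (fun x => f x + g x) l) = sumR (map f l) + sumR (map g l).
Proof. induction l; simpl; [ring | rewrite IHl; ring]. Qed.

Lemma sum_le {A} (f g : A -> R) (l : list A) :
  (forall x, In x l -> f x <= g x) -> sumR (map f l) <= sumR (map g l).
Proof.
  induction l; simpl; intros H; [lra|].
  apply Rplus_le_compat; [apply H; auto | apply IHl; auto].
Qed.

Lemma sum_ext {A} (f g : A -> R) (l : list A) :
  (forall x, f x = g x) -> sumR (map f l) = sumR (map g l).
Proof. intros H; f_equal; apply map_ext; auto. Qed.

Lemma sum_const1 L : forall s, sumR (map (fun _ : nat => 1) (seq s L)) = INR L.
Proof.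
  induction L; intros s; cbn [seq map fold_right]; [reflexivity|].
  rewrite IHL, S_INR; ring.
Qed.

Lemma sum_seq_shift (f : nat -> R) s L :
  sumR (map f (seq (S s) L)) = sumR (map (fun j => f (S j)) (seq s L)).
Proof. rewrite <- seq_shift, map_map. reflexivity. Qed.

Definition bernoulli_weight (m : nat) (p : nat -> R) (D : list bool) : R :=
  fold_right Rmult 1
    (map (fun w => if nth w D false then p w else 1 - p w) (seq 0 m)).

Lemma bernoulli_weight_cons m p b D :
  bernoulli_weight (S m) p (b :: D)
  = (if b then p 0%nat else 1 - p 0%nat) * bernoulli_weight m (fun j => p (S j)) D.
Proof.
  unfold bernoulli_weight. cbn [seq map fold_right]. rewrite <- seq_shift, map_map.
  destruct b; reflexivity.
Qed.

Lemma bernoulli_weight_nonneg m p D :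
  (forall j, 0 <= p j <= 1) -> 0 <= bernoulli_weight m p D.
Proof.
  intros Hp. unfold bernoulli_weight. induction (seq 0 m); simpl; [lra|].
  destruct (nth a D false); specialize (Hp a); nra.
Qed.

Lemma bernoulli_weight_total m : forall p,
  sumR (map (bernoulli_weight m p) (bool_lists m)) = 1.
Proof.
  induction m as [|m IH]; intros p; [unfold bernoulli_weight; simpl; ring|].
  cbn [bool_lists]. rewrite map_app, sum_app, !map_map.
  rewrite (sum_ext _ (fun D => p 0%nat * bernoulli_weight m (fun j => p (S j)) D))
    by (intros; apply bernoulli_weight_cons).
  rewrite (sum_ext (fun D => bernoulli_weight (S m) p (false :: D))
             (fun D => (1 - p 0%nat) * bernoulli_weight m (fun j => p (S j)) D))
    by (intros; apply bernoulli_weight_cons).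
  rewrite !sum_scale, IH. ring.
Qed.

Lemma activity_cons b D :
  INR (activity (b :: D)) = (if b then 1 else 0) + INR (activity D).
Proof. unfold activity. destruct b; cbn [filter length]; [rewrite S_INR|]; ring. Qed.

Lemma bernoulli_weight_mean_activity m : forall p,
  sumR (map (fun D => bernoulli_weight m p D * INR (activity D)) (bool_lists m))
  = sumR (map p (seq 0 m)).
Proof.
  induction m as [|m IH]; intros p; [unfold bernoulli_weight; simpl; ring|].
  cbn [bool_lists]. rewrite map_app, sum_app, !map_map.
  set (w := bernoulli_weight m (fun j => p (S j))).
  rewrite (sum_ext _ (fun D => p 0%nat * w D + p 0%nat * (w D * INR (activity D))))
    by (intros; rewrite bernoulli_weight_cons, activity_cons; cbn iota; fold w; ring).
  rewrite (sum_ext (fun D => bernoulli_weight (S m) p (false :: D)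
                             * INR (activity (false :: D)))
             (fun D => (1 - p 0%nat) * (w D * INR (activity D))))
    by (intros; rewrite bernoulli_weight_cons, activity_cons; cbn iota; fold w; ring).
  rewrite sum_plus, !sum_scale. unfold w. rewrite IH, bernoulli_weight_total.
  cbn [seq map fold_right]. rewrite sum_seq_shift. ring.
Qed.

Section Model.

Variables (lam : R) (k l : nat).
Hypotheses (Hlam : 0 < lam) (Hk : (1 <= k)%nat) (Hlamkl : lam <= INR (k + l)).

Definition download_prob (h : history) (w : nat) : R :=
  lam * INR (score h w) / (INR (l + (length h + 1) * k) + INR (length h) * lam).

Lemma step_weight_bernoulli h D :
  step_weight lam k l h D
  = bernoulli_weight (l + (length h + 1) * k) (download_prob h) D.
Proof. reflexivity. Qed.

Lemma score_le h w : (score h w <= S (length h))%nat.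
Proof. unfold score. apply le_n_S, filter_length_le. Qed.

Lemma denominator_bounds n :
  INR k <= INR (l + (n + 1) * k) /\ INR (k + l) <= INR (l + (n + 1) * k)
  /\ 0 < INR (l + (n + 1) * k) + INR n * lam.
Proof.
  assert (Hk1 : 1 <= INR k) by (apply (le_INR 1); auto).
  assert (H1 : INR k <= INR (l + (n + 1) * k)) by (apply le_INR; nia).
  assert (H2 : INR (k + l) <= INR (l + (n + 1) * k)) by (apply le_INR; nia).
  pose proof (pos_INR n). repeat split; nra.
Qed.

Lemma download_prob_bounds h w : 0 <= download_prob h w <= 1.
Proof.
  unfold download_prob. set (n := length h).
  destruct (denominator_bounds n) as (_ & HL & Hd).
  assert (Hs : INR (score h w) <= INR n + 1)
    by (rewrite <- S_INR; apply le_INR, score_le).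
  pose proof (pos_INR (score h w)). pose proof (pos_INR n).
  set (L := INR (l + (n + 1) * k)) in *.
  split.
  - apply Rmult_le_pos; [nra | left; apply Rinv_0_lt_compat; lra].
  - apply (Rmult_le_reg_r (L + INR n * lam)); [lra|].
    unfold Rdiv. rewrite Rmult_assoc, Rinv_l by lra. nra.
Qed.

Lemma step_weight_nonneg h D : 0 <= step_weight lam k l h D.
Proof.
  rewrite step_weight_bernoulli. apply bernoulli_weight_nonneg.
  intros; apply download_prob_bounds.
Qed.

Lemma step_weight_total h :
  sumR (map (step_weight lam k l h) (bool_lists (l + (length h + 1) * k))) = 1.
Proof. apply bernoulli_weight_total. Qed.

Lemma expect_S m h f : expect lam k l (S m) h f =
  sumR (map (fun D => step_weight lam k l h D * expect lam k l m (h ++ [D]) f)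
             (bool_lists (l + (length h + 1) * k))).
Proof. reflexivity. Qed.

(* Monotonicity: only histories of the reachable length matter. *)
Lemma expect_mono m : forall h f g,
  (forall h', length h' = (length h + m)%nat -> f h' <= g h') ->
  expect lam k l m h f <= expect lam k l m h g.
Proof.
  induction m as [|m IH]; intros h f g H.
  - apply H. simpl; lia.
  - rewrite !expect_S. apply sum_le. intros D _.
    apply Rmult_le_compat_l; [apply step_weight_nonneg|].
    apply IH. intros h' Hh'. apply H. rewrite Hh', length_app. simpl. lia.
Qed.

Lemma expect_affine m : forall h f a b,
  expect lam k l m h (fun x => a * f x + b) = a * expect lam k l m h f + b.
Proof.
  induction m as [|m IH]; intros h f a b; [reflexivity|].
  rewrite !expect_S.
  rewrite (sum_ext _ (fun D => a * (step_weight lam k l h D * expect lam k l m (h ++ [D]) f)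
                               + b * step_weight lam k l h D))
    by (intros; rewrite IH; ring).
  rewrite sum_plus, !sum_scale, step_weight_total. ring.
Qed.

Lemma expect_tower m : forall h f,
  expect lam k l (S m) h f = expect lam k l m h (fun h' => expect lam k l 1 h' f).
Proof.
  induction m as [|m IH]; intros h f; [reflexivity|].
  rewrite (expect_S (S m) h f), (expect_S m h).
  apply sum_ext. intros D. rewrite IH. reflexivity.
Qed.

Definition total_activity (h : history) : R :=
  sumR (map (fun D => INR (activity D)) h).

Lemma total_activity_snoc h D :
  total_activity (h ++ [D]) = total_activity h + INR (activity D).
Proof. unfold total_activity. rewrite map_app, sum_app. simpl. ring. Qed.

Lemma total_activity_nonneg h : 0 <= total_activity h.
Proof.
  unfold total_activity. induction h; simpl; [lra|].
  pose proof (pos_INR (activity a)). lra.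
Qed.

Lemma window_count_le D : forall s L,
  sumR (map (fun j => if nth j D false then 1 else 0) (seq s L)) <= INR (activity D).
Proof.
  induction D as [|b D IH]; intros s L.
  - rewrite (sum_ext _ (fun j => 0 * 1)) by (intros [|j]; simpl; ring).
    rewrite sum_scale. simpl. lra.
  - rewrite activity_cons. destruct s as [|s].
    + destruct L as [|L].
      * simpl. pose proof (pos_INR (activity D)). destruct b; lra.
      * cbn [seq map fold_right]. rewrite sum_seq_shift. cbn [nth].
        specialize (IH 0%nat L). lra.
    + rewrite sum_seq_shift. cbn [nth]. specialize (IH s L). destruct b; lra.
Qed.

(* Each download raises exactly one score by one, so the scores of the first
   L books sum to at most L plus the total activity. *)
Lemma sum_scores_le h L :
  sumR (map (fun j => INR (score h j)) (seq 0 L)) <= INR L + total_activity h.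
Proof.
  assert (Hdl : forall s, sumR (map (fun j => INR (length (filter (fun D => nth j D false) h)))
                                   (seq s L)) <= total_activity h).
  { induction h as [|D h IH]; intros s.
    - rewrite (sum_ext _ (fun j => 0 * 1)) by (intros; simpl; ring).
      rewrite sum_scale. unfold total_activity. simpl. lra.
    - rewrite (sum_ext _ (fun j => (if nth j D false then 1 else 0)
                     + INR (length (filter (fun D0 => nth j D0 false) h)))).
      2:{ intros j. cbn [filter]. destruct (nth j D false); cbn [length];
          [rewrite S_INR|]; ring. }
      rewrite sum_plus. unfold total_activity; cbn [map fold_right]. fold (total_activity h).
      pose proof (window_count_le D s L). pose proof (IH s). lra. }
  unfold score.
  rewrite (sum_ext _ (fun j => INR (length (filter (fun D => nth j D false) h)) + 1))
    by (intros; rewrite S_INR; ring).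
  rewrite sum_plus, sum_const1. pose proof (Hdl 0%nat). lra.
Qed.

Lemma total_activity_drift h :
  let L := INR (l + (length h + 1) * k) in
  let den := L + INR (length h) * lam in
  expect lam k l 1 h total_activity
  <= (1 + lam / den) * total_activity h + lam * L / den.
Proof.
  intros L den.
  rewrite expect_S. simpl expect.
  rewrite (sum_ext _ (fun D => total_activity h * step_weight lam k l h D
              + step_weight lam k l h D * INR (activity D)))
    by (intros; rewrite total_activity_snoc; ring).
  rewrite sum_plus, sum_scale, step_weight_total.
  rewrite (sum_ext (fun D => step_weight lam k l h D * INR (activity D))
    (fun D => bernoulli_weight (l + (length h + 1) * k) (download_prob h) D
              * INR (activity D))) by (intros; rewrite step_weight_bernoulli; reflexivity).
  rewrite bernoulli_weight_mean_activity. unfold download_prob. fold L den.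
  rewrite (sum_ext _ (fun j => (lam / den) * INR (score h j))) by (intros; unfold Rdiv; ring).
  rewrite sum_scale.
  destruct (denominator_bounds (length h)) as (_ & _ & Hd).
  fold L den in Hd.
  assert (Hq : 0 <= lam / den)
    by (unfold Rdiv; apply Rmult_le_pos; [lra | left; apply Rinv_0_lt_compat; lra]).
  pose proof (sum_scores_le h (l + (length h + 1) * k)) as Hs. fold L in Hs.
  apply (Rmult_le_compat_l _ _ _ Hq) in Hs.
  unfold Rdiv in *. nra.
Qed.

Lemma expect_total_activity n :
  expect lam k l n [] total_activity <= INR n * lam.
Proof.
  induction n as [|n IH]; [simpl; unfold total_activity; simpl; lra|].
  rewrite expect_tower.
  set (L := INR (l + (n + 1) * k)).
  set (den := L + INR n * lam).
  destruct (denominator_bounds n) as (_ & _ & Hd).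
  fold L den in Hd.
  eapply Rle_trans.
  { apply (expect_mono n [] _
             (fun h => (1 + lam / den) * total_activity h + lam * L / den)).
    intros h' Hh'. simpl in Hh'.
    pose proof (total_activity_drift h') as Hs. cbv zeta in Hs.
    rewrite Hh' in Hs. exact Hs. }
  rewrite expect_affine.
  assert (Hc : 0 <= 1 + lam / den).
  { assert (0 <= lam / den)
      by (unfold Rdiv; apply Rmult_le_pos; [lra | left; apply Rinv_0_lt_compat; lra]).
    lra. }
  apply (Rmult_le_compat_l _ _ _ Hc) in IH.
  assert (Hid : (1 + lam / den) * (INR n * lam) + lam * L / den = INR (S n) * lam)
    by (rewrite S_INR; unfold den in *; field; lra).
  lra.
Qed.

End Model.

(* Every customer counted by Y_r has activity at least r. *)
Lemma Y_ring_le_total_activity r h : INR r * INR (Y_ring r h) <= total_activity h.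
Proof.
  induction h as [|D h IH]; [unfold Y_ring, total_activity; simpl; lra|].
  unfold Y_ring, total_activity in *. cbn [filter map fold_right].
  destruct (Nat.leb r (activity D)) eqn:E.
  - apply Nat.leb_le, le_INR in E. cbn [length]. rewrite S_INR. lra.
  - pose proof (pos_INR (activity D)). lra.
Qed.

Lemma event_le_total_activity r n eps h :
  0 < INR r -> 0 < INR n -> 0 < eps ->
  (if Rlt_dec eps (INR (Y_ring r h) / INR n) then 1 else 0)
  <= / (INR r * INR n * eps) * total_activity h + 0.
Proof.
  intros Hr Hn Heps.
  set (c := INR r * INR n * eps).
  assert (Hc : 0 < c) by (unfold c; apply Rmult_lt_0_compat; [nra | lra]).
  pose proof (total_activity_nonneg h). pose proof (Rinv_0_lt_compat c Hc).
  destruct (Rlt_dec eps (INR (Y_ring r h) / INR n)) as [Hl | _]; [|nra].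
  assert (HY : eps * INR n < INR (Y_ring r h)).
  { apply (Rmult_lt_compat_r (INR n)) in Hl; [|lra].
    unfold Rdiv in Hl. rewrite Rmult_assoc, Rinv_l in Hl by lra. lra. }
  assert (HcT : c <= total_activity h).
  { pose proof (Y_ring_le_total_activity r h).
    assert (INR r * (eps * INR n) <= INR r * INR (Y_ring r h))
      by (apply Rmult_le_compat_l; lra).
    unfold c. lra. }
  apply (Rmult_le_compat_l (/ c)) in HcT; [|lra].
  rewrite Rinv_l in HcT by lra. lra.
Qed.

Lemma prob_Y_large_le (lam : R) (k l : nat)
  (Hlam : 0 < lam) (Hk : (1 <= k)%nat) (Hlamkl : lam <= INR (k + l))
  (eps : R) (Heps : 0 < eps) (r n : nat) :
  (1 <= r)%nat -> (1 <= n)%nat -> prob_Y_large lam k l n r eps <= lam / (INR r * eps).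
Proof.
  intros Hr Hn.
  assert (Hr' : 0 < INR r) by (apply lt_0_INR; lia).
  assert (Hn' : 0 < INR n) by (apply lt_0_INR; lia).
  assert (Hc : 0 < INR r * INR n * eps) by (apply Rmult_lt_0_compat; nra).
  unfold prob_Y_large.
  eapply Rle_trans.
  { apply (expect_mono lam k l Hlam Hk Hlamkl n [] _
             (fun h => / (INR r * INR n * eps) * total_activity h + 0)).
    intros h' _. apply event_le_total_activity; assumption. }
  rewrite expect_affine.
  pose proof (expect_total_activity lam k l Hlam Hk Hlamkl n) as HT.
  apply (Rmult_le_compat_l (/ (INR r * INR n * eps))) in HT;
    [|left; apply Rinv_0_lt_compat; lra].
  replace (lam / (INR r * eps)) with (/ (INR r * INR n * eps) * (INR n * lam))
    by (field; lra).
  lra.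
Qed.

Lemma inv_bound_eventually_small (a b delta : R) :
  0 < a -> 0 < b -> 0 < delta ->
  exists r0 : nat, (1 <= r0)%nat /\
    forall r : nat, (r0 <= r)%nat -> a / (INR r * b) <= delta.
Proof.
  intros Ha Hb Hdelta.
  assert (Hpos : 0 < b * delta / a)
    by (unfold Rdiv; apply Rmult_lt_0_compat; [nra | apply Rinv_0_lt_compat; lra]).
  destruct (archimed_cor1 _ Hpos) as [N [HN HN0]].
  exists N. split; [lia|]. intros r Hr.
  assert (HN' : 0 < INR N) by (apply lt_0_INR; lia).
  assert (HrN : INR N <= INR r) by (apply le_INR; lia).
  assert (Hlt : a < b * delta * INR N).
  { apply (Rmult_lt_compat_r (a * INR N)) in HN; [|nra].
    replace (/ INR N * (a * INR N)) with a in HN by (field; lra).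
    replace (b * delta / a * (a * INR N)) with (b * delta * INR N) in HN by (field; lra).
    exact HN. }
  apply (Rmult_le_reg_r (INR r * b)); [nra|].
  unfold Rdiv. rewrite Rmult_assoc, Rinv_l by nra. nra.
Qed.

Theorem mainTheorem5 (lam : R) (k l : nat)
  (Hlam : 0 < lam) (Hk : (1 <= k)%nat) (Hlamkl : lam <= INR (k + l))
  (eps : R) (Heps : 0 < eps < 1) :
  forall delta : R, 0 < delta ->
  exists r0 : nat, forall r : nat, (r0 <= r)%nat ->
    forall n : nat, (1 <= n)%nat -> prob_Y_large lam k l n r eps <= delta.
Proof.
  intros delta Hdelta.
  destruct (inv_bound_eventually_small lam eps delta Hlam (proj1 Heps) Hdelta)
    as [r0 [Hr0 Hsmall]].
  exists r0. intros r Hr n Hn.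
  eapply Rle_trans.
  - apply prob_Y_large_le; [assumption .. | tauto | lia | assumption].
  - apply Hsmall, Hr.
Qed.
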